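(* Assume the setting below (in particular Assumption 1), with $\nu\in(0,1)$, $\mu>0$, $\beta>0$, and let $\theta^*$ be any minimizer over $\Theta$ of $\theta\mapsto\tilde{\mathsf R}(\theta)+\mu V(\theta)+\frac{\beta}{n}K(\theta)$. Then for every $\theta\in\Theta$, $$\tilde{\mathsf R}(\theta)-\tilde{\mathsf R}(\theta^* )\ge\mu\big(V(\theta^* )-V(\theta)\big)+\frac{\beta}{n}\big(K(\theta^* )-K(\theta)\big)+\Big(\frac{(1-\nu)C_\ell}{2}-\mu\Big)\|f_\theta-f_{\theta^*}\|_2^2 .$$
   Context: Setting: $(X,Y)$ random pair in $\mathcal X\times\mathbb R$ with $|Y|\le b$ a.s. ($b>0$); $f_1,\dots,f_M$ deterministic measurable functions with $\max_j|f_j(X)|\le b$ a.s.; $\Theta=\{\theta\in\mathbb R^M:\theta_j\ge0,\ \sum_j\theta_j=1\}$, $f_\theta=\sum_j\theta_jf_j$, $e_1,\dots,e_M$ the canonical basis of $\mathbb R^M$; $\|f\|_2=\sqrt{\mathbb E f(X)^2}$; prior $\pi$ with $\pi_j>0$, $\sum_j\pi_j=1$; $n\ge1$ an integer. Assumption 1: for all $f,g\in[-b,b]$, $|\ell(Y,f)-\ell(Y,g)|\le C_b|f-g|$ a.s.; and a.s. $\ell(Y,\cdot)$ is strongly convex on $[-b,b]$ with modulus $C_\ell>0$, i.e. $\ell(Y,\alpha a+(1-\alpha)a')\le\alpha\ell(Y,a)+(1-\alpha)\ell(Y,a')-\frac{C_\ell}2\alpha(1-\alpha)(a-a')^2$ for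 $a,a'\in[-b,b]$, $\alpha\in(0,1)$. Notation: $\ell_\theta(y,x)=\ell(y,f_\theta(x))$, $\mathsf R(\theta)=\mathbb E\,\ell(Y,f_\theta(X))$; $\tilde\ell_\theta=(1-\nu)\ell_\theta+\nu\sum_j\theta_j\ell_{e_j}$ and $\tilde{\mathsf R}(\theta)=\mathbb E\,\tilde\ell_\theta(Y,X)=(1-\nu)\mathsf R(\theta)+\nu\sum_j\theta_j\mathsf R(e_j)$; $K(\theta)=\sum_j\theta_j\log(1/\pi_j)$; $V(\theta)=\sum_j\theta_j\|f_j-f_\theta\|_2^2$. *)

From Stdlib Require Import Reals Lra.
Open Scope R_scope.

(* Every genuine probability space (Omega, F, P) is an instance:
   integrable f := f is F-measurable and P-integrable, E := integral w.r.t. P,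
   null N := N is contained in a P-null measurable set. *)
Record ProbSpace := {
  Omega : Type;
  integrable : (Omega -> R) -> Prop;
  E : (Omega -> R) -> R;
  null : (Omega -> Prop) -> Prop;
  integrable_const : forall c : R, integrable (fun _ => c);
  integrable_plus : forall f g, integrable f -> integrable g ->
                      integrable (fun w => f w + g w);
  integrable_scal : forall (c : R) f, integrable f -> integrable (fun w => c * f w);
  E_const : forall c : R, E (fun _ => c) = c;
  E_plus : forall f g, integrable f -> integrable g ->
             E (fun w => f w + g w) = E f + E g;
  E_scal : forall (c : R) f, integrable f -> E (fun w => c * f w) = c * E f;
  null_empty : null (fun _ => False);
  null_sub : forall N N' : Omega -> Prop, (forall w, N w -> N' w) -> null N' -> null N;
  null_union : forall N N', null N -> null N' -> null (fun w => N w \/ N' w);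
  E_mono : forall f g, integrable f -> integrable g ->
             (exists N, null N /\ forall w, ~ N w -> f w <= g w) -> E f <= E g
}.

Definition almost_surely (ps : ProbSpace) (P : Omega ps -> Prop) : Prop :=
  exists N, null ps N /\ forall w, ~ N w -> P w.

Fixpoint sumM (M : nat) (g : nat -> R) : R :=
  match M with
  | O => 0
  | S m => sumM m g + g m
  end.

Definition in_simplex (M : nat) (theta : nat -> R) : Prop :=
  (forall j, (j < M)%nat -> 0 <= theta j) /\ sumM M theta = 1.

Definition e_vec (j : nat) : nat -> R := fun k => if Nat.eqb k j then 1 else 0.

Definition f_theta {Xs : Type} (M : nat) (f : nat -> Xs -> R) (theta : nat -> R)
  : Xs -> R := fun x => sumM M (fun j => theta j * f j x).

Definition sqnorm2 (ps : ProbSpace) {Xs : Type} (X : Omega ps -> Xs) (g : Xs -> R) : R :=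
  E ps (fun w => (g (X w)) ^ 2).

Definition risk (ps : ProbSpace) {Xs : Type} (X : Omega ps -> Xs) (Y : Omega ps -> R)
  (l : R -> R -> R) (M : nat) (f : nat -> Xs -> R) (theta : nat -> R) : R :=
  E ps (fun w => l (Y w) (f_theta M f theta (X w))).

Definition risk_tilde (ps : ProbSpace) {Xs : Type} (X : Omega ps -> Xs) (Y : Omega ps -> R)
  (l : R -> R -> R) (M : nat) (f : nat -> Xs -> R) (nu : R) (theta : nat -> R) : R :=
  (1 - nu) * risk ps X Y l M f theta
  + nu * sumM M (fun j => theta j * risk ps X Y l M f (e_vec j)).

Definition Kdiv (M : nat) (pi : nat -> R) (theta : nat -> R) : R :=
  sumM M (fun j => theta j * ln (1 / pi j)).

Definition Vvar (ps : ProbSpace) {Xs : Type} (X : Omega ps -> Xs)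
  (M : nat) (f : nat -> Xs -> R) (theta : nat -> R) : R :=
  sumM M (fun j => theta j * sqnorm2 ps X (fun x => f j x - f_theta M f theta x)).

Definition objective (ps : ProbSpace) {Xs : Type} (X : Omega ps -> Xs) (Y : Omega ps -> R)
  (l : R -> R -> R) (M : nat) (f : nat -> Xs -> R) (pi : nat -> R)
  (nu mu beta : R) (n : nat) (theta : nat -> R) : R :=
  risk_tilde ps X Y l M f nu theta + mu * Vvar ps X M f theta
  + beta / INR n * Kdiv M pi theta.

From Stdlib Require Import Reals Lra Lia FunctionalExtensionality.
Open Scope R_scope.

(* For theta in the simplex and 0 < a < 1 consider the mixture
   t_a = a theta + (1 - a) theta_star, again a point of the simplex.
   Along this segment the three parts of the objective behave as follows,
   writing D = ||f_theta - f_theta_star||_2^2: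
   - the aggregate f_{t_a} is the mixture of f_theta and f_theta_star, so by
     the a.s. strong convexity of the loss (Assumption 1)
       tilde R(t_a) <= a tilde R(theta) + (1-a) tilde R(theta_star) - (1-nu) C_l/2 a(1-a) D;
   - the variance V is concave with exact defect:  V(t_a) = a V(theta) + (1-a) V(theta_star) + a(1-a) D;
   - K is linear.
   Hence objective(t_a) <= a obj(theta) + (1-a) obj(theta_star) - a(1-a) c D with
   c = (1-nu) C_l/2 - mu.  Minimality of theta_star then gives
   obj(theta) - obj(theta_star) >= (1 - a) c D for every a, and letting a -> 0
   yields the claim. *)

Lemma sumM_plus m g h : sumM m (fun j => g j + h j) = sumM m g + sumM m h.
Proof. induction m; simpl; [ring | rewrite IHm; ring]. Qed.

Lemma sumM_scal m c g : sumM m (fun j => c * g j) = c * sumM m g.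
Proof. induction m; simpl; [ring | rewrite IHm; ring]. Qed.

Lemma sumM_ext m g h : (forall j, (j < m)%nat -> g j = h j) -> sumM m g = sumM m h.
Proof.
  induction m; intros H; simpl; auto.
  rewrite IHm, (H m); auto.
Qed.

Definition mix (a : R) (t t' : nat -> R) : nat -> R := fun j => a * t j + (1 - a) * t' j.

Lemma sumM_mix m a t t' g :
  sumM m (fun j => mix a t t' j * g j)
  = a * sumM m (fun j => t j * g j) + (1 - a) * sumM m (fun j => t' j * g j).
Proof. unfold mix; induction m; simpl; [ring | rewrite IHm; ring]. Qed.

Lemma mix_in_simplex M a t t' :
  0 < a < 1 -> in_simplex M t -> in_simplex M t' -> in_simplex M (mix a t t').
Proof.
  intros Ha [Ht0 Ht1] [Ht0' Ht1']; split.
  - intros j Hj; specialize (Ht0 j Hj); specialize (Ht0' j Hj); unfold mix; nra.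
  - unfold mix; rewrite sumM_plus, !sumM_scal, Ht1, Ht1'; ring.
Qed.

Lemma f_theta_mix {Xs} M (f : nat -> Xs -> R) a t t' x :
  f_theta M f (mix a t t') x = a * f_theta M f t x + (1 - a) * f_theta M f t' x.
Proof. apply sumM_mix. Qed.

Lemma Kdiv_mix M pi a t t' :
  Kdiv M pi (mix a t t') = a * Kdiv M pi t + (1 - a) * Kdiv M pi t'.
Proof. apply sumM_mix. Qed.

(* A convex combination of values in [-b, b] stays in [-b, b]; this keeps the
   aggregates inside the domain where Assumption 1 applies. *)
Lemma weighted_sum_bound m (t g : nat -> R) b :
  (forall j, (j < m)%nat -> 0 <= t j) ->
  (forall j, (j < m)%nat -> Rabs (g j) <= b) ->
  - b * sumM m t <= sumM m (fun j => t j * g j) <= b * sumM m t.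
Proof.
  intros Ht Hg; induction m; simpl; [lra |].
  assert (IH := IHm ltac:(intros; apply Ht; lia) ltac:(intros; apply Hg; lia)).
  assert (h0 := Ht m ltac:(lia)); assert (hb := Hg m ltac:(lia)).
  pose proof (Rle_abs (g m)); pose proof (Rle_abs (- g m)); rewrite Rabs_Ropp in *.
  nra.
Qed.

Lemma f_theta_bound {Xs} M (f : nat -> Xs -> R) t x b :
  in_simplex M t -> (forall j, (j < M)%nat -> Rabs (f j x) <= b) ->
  - b <= f_theta M f t x <= b.
Proof.
  intros [Ht0 Ht1] Hb.
  pose proof (weighted_sum_bound M t (fun j => f j x) b Ht0 Hb) as H.
  rewrite Ht1 in H; unfold f_theta; lra.
Qed.

Lemma integrable_wsum ps m (c : nat -> R) (g : nat -> Omega ps -> R) :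
  (forall k, (k < m)%nat -> integrable ps (g k)) ->
  integrable ps (fun w => sumM m (fun k => c k * g k w)).
Proof.
  induction m; intros H; simpl; [apply integrable_const |].
  apply integrable_plus; [apply IHm; intros; apply H; lia |].
  apply integrable_scal, H; lia.
Qed.

Lemma E_wsum ps m (c : nat -> R) (g : nat -> Omega ps -> R) :
  (forall k, (k < m)%nat -> integrable ps (g k)) ->
  E ps (fun w => sumM m (fun k => c k * g k w)) = sumM m (fun k => c k * E ps (g k)).
Proof.
  induction m; intros H; simpl; [apply E_const |].
  assert (Hm : forall k, (k < m)%nat -> integrable ps (g k)) by (intros; apply H; lia).
  assert (Hlast : integrable ps (g m)) by (apply H; lia).
  rewrite E_plus, E_scal, IHm;
    auto using integrable_wsum, integrable_scal.
Qed.

Section Aggregation.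

Variables (ps : ProbSpace) (Xs : Type) (X : Omega ps -> Xs) (Y : Omega ps -> R).
Variables (M : nat) (f : nat -> Xs -> R) (l : R -> R -> R) (b Cl : R).

Hypothesis hint_f : forall j k, (j < M)%nat -> (k < M)%nat ->
  integrable ps (fun w => f j (X w) * f k (X w)).

(* f_j f_c is a weighted sum of the integrable products f_j f_k. *)
Lemma integrable_f_fth j c :
  (j < M)%nat -> integrable ps (fun w => f j (X w) * f_theta M f c (X w)).
Proof.
  intros Hj.
  replace (fun w => f j (X w) * f_theta M f c (X w))
    with (fun w => sumM M (fun k => c k * (f j (X w) * f k (X w)))).
  - apply integrable_wsum; intros; apply hint_f; auto.
  - apply functional_extensionality; intro w; unfold f_theta.
    rewrite <- sumM_scal; apply sumM_ext; intros; ring.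
Qed.

Lemma E_fth_fth c c' :
  integrable ps (fun w => f_theta M f c (X w) * f_theta M f c' (X w)) /\
  E ps (fun w => f_theta M f c (X w) * f_theta M f c' (X w))
  = sumM M (fun j => c j * E ps (fun w => f j (X w) * f_theta M f c' (X w))).
Proof.
  replace (fun w => f_theta M f c (X w) * f_theta M f c' (X w))
    with (fun w => sumM M (fun j => c j * (f j (X w) * f_theta M f c' (X w)))).
  - split; [apply integrable_wsum | apply E_wsum]; intros; apply integrable_f_fth; auto.
  - apply functional_extensionality; intro w; unfold f_theta at 2.
    rewrite Rmult_comm, <- sumM_scal; apply sumM_ext; intros; ring.
Qed.

Lemma integrable_fth_fth c c' :
  integrable ps (fun w => f_theta M f c (X w) * f_theta M f c' (X w)).
Proof. apply E_fth_fth. Qed.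

Lemma integrable_fth_sqdiff c c' :
  integrable ps (fun w => (f_theta M f c (X w) - f_theta M f c' (X w)) ^ 2).
Proof.
  replace (fun w => (f_theta M f c (X w) - f_theta M f c' (X w)) ^ 2)
    with (fun w => (f_theta M f c (X w) * f_theta M f c (X w)
                    + (-2) * (f_theta M f c (X w) * f_theta M f c' (X w)))
                   + f_theta M f c' (X w) * f_theta M f c' (X w)).
  - repeat apply integrable_plus; try apply integrable_scal; apply integrable_fth_fth.
  - apply functional_extensionality; intro w; ring.
Qed.

Lemma Vvar_expand t :
  sumM M t = 1 ->
  Vvar ps X M f t = sumM M (fun j => t j * E ps (fun w => f j (X w) * f j (X w)))
                    - E ps (fun w => f_theta M f t (X w) * f_theta M f t (X w)).
Proof.
  intros Ht. set (Q := E ps (fun w => f_theta M f t (X w) * f_theta M f t (X w))).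
  assert (Hj : forall j, (j < M)%nat ->
    sqnorm2 ps X (fun x => f j x - f_theta M f t x)
    = E ps (fun w => f j (X w) * f j (X w))
      + (-2) * E ps (fun w => f j (X w) * f_theta M f t (X w)) + Q).
  { intros j Hj; unfold sqnorm2.
    replace (fun w => (f j (X w) - f_theta M f t (X w)) ^ 2)
      with (fun w => (f j (X w) * f j (X w) + (-2) * (f j (X w) * f_theta M f t (X w)))
                     + f_theta M f t (X w) * f_theta M f t (X w))
      by (apply functional_extensionality; intro; ring).
    rewrite !E_plus, E_scal; try reflexivity;
      repeat first [ apply integrable_plus | apply integrable_scal | apply hint_f
                   | apply integrable_f_fth | apply integrable_fth_fth ]; auto. }
  unfold Vvar; rewrite (sumM_ext _ _
    (fun j => t j * E ps (fun w => f j (X w) * f j (X w))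
              + (-2) * (t j * E ps (fun w => f j (X w) * f_theta M f t (X w))) + Q * t j))
    by (intros j Hj'; rewrite Hj by auto; ring).
  rewrite !sumM_plus, !sumM_scal, Ht, <- (proj2 (E_fth_fth t t)); unfold Q; ring.
Qed.

(* Exact defect of ||f_t||^2 along a mixture (parallelogram identity). *)
Lemma E_fth_sq_mix a t t' :
  E ps (fun w => f_theta M f (mix a t t') (X w) * f_theta M f (mix a t t') (X w))
  = a * E ps (fun w => f_theta M f t (X w) * f_theta M f t (X w))
    + (1 - a) * E ps (fun w => f_theta M f t' (X w) * f_theta M f t' (X w))
    - a * (1 - a) * sqnorm2 ps X (fun x => f_theta M f t x - f_theta M f t' x).
Proof.
  replace (fun w => f_theta M f (mix a t t') (X w) * f_theta M f (mix a t t') (X w))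
    with (fun w => (a * (f_theta M f t (X w) * f_theta M f t (X w))
             + (1 - a) * (f_theta M f t' (X w) * f_theta M f t' (X w)))
             + (- (a * (1 - a))) * (f_theta M f t (X w) - f_theta M f t' (X w)) ^ 2)
    by (apply functional_extensionality; intro w; rewrite f_theta_mix; ring).
  rewrite !E_plus, !E_scal; unfold sqnorm2; try ring;
    repeat first [ apply integrable_plus | apply integrable_scal
                 | apply integrable_fth_fth | apply integrable_fth_sqdiff ].
Qed.

Lemma Vvar_mix a t t' :
  sumM M t = 1 -> sumM M t' = 1 ->
  Vvar ps X M f (mix a t t')
  = a * Vvar ps X M f t + (1 - a) * Vvar ps X M f t'
    + a * (1 - a) * sqnorm2 ps X (fun x => f_theta M f t x - f_theta M f t' x).
Proof.
  intros Ht Ht'.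
  assert (Hmix : sumM M (mix a t t') = 1).
  { unfold mix; rewrite sumM_plus, !sumM_scal, Ht, Ht'; ring. }
  rewrite !Vvar_expand, E_fth_sq_mix, sumM_mix by assumption; ring.
Qed.

Hypothesis hf : almost_surely ps (fun w => forall j, (j < M)%nat -> Rabs (f j (X w)) <= b).
Hypothesis hconv : almost_surely ps (fun w => forall a a' alpha,
  -b <= a <= b -> -b <= a' <= b -> 0 < alpha < 1 ->
  l (Y w) (alpha * a + (1 - alpha) * a')
    <= alpha * l (Y w) a + (1 - alpha) * l (Y w) a'
       - Cl / 2 * alpha * (1 - alpha) * (a - a') ^ 2).
Hypothesis hint_l : forall t, in_simplex M t ->
  integrable ps (fun w => l (Y w) (f_theta M f t (X w))).

(* Strong convexity of the loss transfers to the risk along mixtures: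
   apply it pointwise off a null set and take expectations. *)
Lemma risk_mix a t t' :
  0 < a < 1 -> in_simplex M t -> in_simplex M t' ->
  risk ps X Y l M f (mix a t t')
  <= a * risk ps X Y l M f t + (1 - a) * risk ps X Y l M f t'
     - Cl / 2 * a * (1 - a) * sqnorm2 ps X (fun x => f_theta M f t x - f_theta M f t' x).
Proof.
  intros Ha Ht Ht'.
  set (L := fun u w => l (Y w) (f_theta M f u (X w))).
  set (S := fun w => (f_theta M f t (X w) - f_theta M f t' (X w)) ^ 2).
  assert (IL : forall u, in_simplex M u -> integrable ps (L u)) by exact hint_l.
  assert (IS : integrable ps S) by apply integrable_fth_sqdiff.
  assert (Hrhs : a * risk ps X Y l M f t + (1 - a) * risk ps X Y l M f t'
                 - Cl / 2 * a * (1 - a) * sqnorm2 ps X (fun x => f_theta M f t x - f_theta M f t' x)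
               = E ps (fun w => (a * L t w + (1 - a) * L t' w)
                                + (- (Cl / 2 * a * (1 - a))) * S w)).
  { rewrite !E_plus, !E_scal; try (unfold risk, sqnorm2, L, S; cbv beta; ring);
      repeat first [ apply integrable_plus | apply integrable_scal | apply IL ]; auto. }
  rewrite Hrhs; apply E_mono.
  - apply IL, mix_in_simplex; auto.
  - repeat first [ apply integrable_plus | apply integrable_scal | apply IL ]; auto.
  - destruct hf as [N1 [HN1 H1]], hconv as [N2 [HN2 H2]].
    exists (fun w => N1 w \/ N2 w); split; [apply null_union; auto |].
    intros w Hw; unfold L, S; rewrite f_theta_mix.
    assert (B := fun u Hu => f_theta_bound M f u (X w) b Hu (H1 w ltac:(tauto))).
    pose proof (H2 w ltac:(tauto) _ _ a (B t Ht) (B t' Ht') Ha); lra.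
Qed.

(* The same inequality for tilde R, whose extra part is linear in the weights. *)
Lemma risk_tilde_mix nu a t t' :
  nu < 1 -> 0 < a < 1 -> in_simplex M t -> in_simplex M t' ->
  risk_tilde ps X Y l M f nu (mix a t t')
  <= a * risk_tilde ps X Y l M f nu t + (1 - a) * risk_tilde ps X Y l M f nu t'
     - (1 - nu) * Cl / 2 * a * (1 - a)
       * sqnorm2 ps X (fun x => f_theta M f t x - f_theta M f t' x).
Proof.
  intros Hnu Ha Ht Ht'; unfold risk_tilde; rewrite sumM_mix.
  pose proof (Rmult_le_compat_l (1 - nu) _ _ ltac:(lra) (risk_mix a t t' Ha Ht Ht')).
  lra.
Qed.

Lemma objective_mix pi nu mu beta n a t t' :
  nu < 1 -> 0 < a < 1 -> in_simplex M t -> in_simplex M t' ->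
  objective ps X Y l M f pi nu mu beta n (mix a t t')
  <= a * objective ps X Y l M f pi nu mu beta n t
     + (1 - a) * objective ps X Y l M f pi nu mu beta n t'
     - a * (1 - a) * ((1 - nu) * Cl / 2 - mu)
       * sqnorm2 ps X (fun x => f_theta M f t x - f_theta M f t' x).
Proof.
  intros Hnu Ha Ht Ht'; unfold objective.
  rewrite Vvar_mix, Kdiv_mix by (apply Ht || apply Ht').
  pose proof (risk_tilde_mix nu a t t' Hnu Ha Ht Ht'); lra.
Qed.

End Aggregation.

Lemma ge_of_ge_scaled D x : (forall a, 0 < a < 1 -> D >= (1 - a) * x) -> D >= x.
Proof.
  intros H; destruct (Rle_dec x D) as [Hle | Hlt]; [lra | exfalso].
  destruct (Rle_dec x 0) as [Hx | Hx].
  { specialize (H (1 / 2) ltac:(lra)); lra. }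
  set (a := (x - D) / (3 * x - D)).
  assert (Hprod : a * (3 * x - D) = x - D) by (unfold a; field; lra).
  assert (Ha : 0 < a < 1) by (split; nra).
  specialize (H a Ha).
  (* D (3x - D) >= (1 - a) x (3x - D) = 2 x^2, impossible since D < x. *)
  nra.
Qed.

Lemma minimizer_gap Ot Os c D :
  (forall a, 0 < a < 1 -> Os <= a * Ot + (1 - a) * Os - a * (1 - a) * c * D) ->
  Ot - Os >= c * D.
Proof.
  intros H; apply ge_of_ge_scaled; intros a Ha.
  specialize (H a Ha); apply Rle_ge, (Rmult_le_reg_l a); [lra | nra].
Qed.

Theorem proposition3
  (ps : ProbSpace) (Xs : Type) (X : Omega ps -> Xs) (Y : Omega ps -> R)
  (b : R) (hb : 0 < b)
  (M : nat) (f : nat -> Xs -> R)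
  (pi : nat -> R) (n : nat) (hn : (1 <= n)%nat)
  (l : R -> R -> R) (Cb Cl : R)
  (* |Y| <= b a.s. *)
  (hY : almost_surely ps (fun w => Rabs (Y w) <= b))
  (* max_j |f_j(X)| <= b a.s. *)
  (hf : almost_surely ps (fun w => forall j, (j < M)%nat -> Rabs (f j (X w)) <= b))
  (* prior *)
  (hpi_pos : forall j, (j < M)%nat -> 0 < pi j)
  (hpi_sum : sumM M pi = 1)
  (* integrability (f_j measurable and bounded; R(theta) finite) *)
  (hint_f : forall j k, (j < M)%nat -> (k < M)%nat ->
              integrable ps (fun w => f j (X w) * f k (X w)))
  (hint_l : forall theta, in_simplex M theta ->
              integrable ps (fun w => l (Y w) (f_theta M f theta (X w))))
  (* Assumption 1 *)
  (hLip : forall u v, -b <= u <= b -> -b <= v <= b ->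
            almost_surely ps (fun w => Rabs (l (Y w) u - l (Y w) v) <= Cb * Rabs (u - v)))
  (hCl : 0 < Cl)
  (hconv : almost_surely ps (fun w => forall a a' alpha,
             -b <= a <= b -> -b <= a' <= b -> 0 < alpha < 1 ->
             l (Y w) (alpha * a + (1 - alpha) * a')
               <= alpha * l (Y w) a + (1 - alpha) * l (Y w) a'
                  - Cl / 2 * alpha * (1 - alpha) * (a - a') ^ 2))
  (nu mu beta : R) (hnu : 0 < nu < 1) (hmu : 0 < mu) (hbeta : 0 < beta)
  (theta_star : nat -> R) (hstar : in_simplex M theta_star)
  (hmin : forall theta, in_simplex M theta ->
            objective ps X Y l M f pi nu mu beta n theta_star
              <= objective ps X Y l M f pi nu mu beta n theta) :
  forall theta, in_simplex M theta ->
    risk_tilde ps X Y l M f nu theta - risk_tilde ps X Y l M f nu theta_star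
    >= mu * (Vvar ps X M f theta_star - Vvar ps X M f theta)
       + beta / INR n * (Kdiv M pi theta_star - Kdiv M pi theta)
       + ((1 - nu) * Cl / 2 - mu)
         * sqnorm2 ps X (fun x => f_theta M f theta x - f_theta M f theta_star x).
Proof.
  intros theta Htheta.
  assert (Hgap : objective ps X Y l M f pi nu mu beta n theta
                 - objective ps X Y l M f pi nu mu beta n theta_star
                 >= ((1 - nu) * Cl / 2 - mu)
                    * sqnorm2 ps X (fun x => f_theta M f theta x - f_theta M f theta_star x)).
  { apply minimizer_gap; intros a Ha.
    pose proof (hmin _ (mix_in_simplex M a theta theta_star Ha Htheta hstar)).
    pose proof (objective_mix ps Xs X Y M f l b Cl hint_f hf hconv hint_l
                  pi nu mu beta n a theta theta_star ltac:(lra) Ha Htheta hstar).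
    lra. }
  unfold objective in Hgap; lra.
Qed.
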